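(* Let $\mathcal{P}$ be a data distribution on $\mathcal{X}\times[C]$, let $D_T$ be a fixed finite test set, and fix a training point $z_i$ that is either consistently helpful or consistently harmful (as defined in the context). Let $D_N$ be a random training set of size $n$ consisting of $z_i$ together with $n-1$ points drawn i.i.d. from $\mathcal{P}$ (written $D_N\sim\mathcal{P}^{n-1}|z_i$). For $k\in\{0,\dots,n-1\}$ let $\tau_k=\mathbb{E}_{D_N\sim\mathcal{P}^{n-1}|z_i}[\Delta^{D_N}_{z_i}(k,D_T)]$ and $\delta_k=\mathrm{Var}_{D_N\sim\mathcal{P}^{n-1}|z_i}(\Delta^{D_N}_{z_i}(k,D_T))$. Then the Shapley value instance attribution $g^{\mathrm{Shap}}$ is $\beta^{\mathrm{Shap}}$-robust and the leave-one-out instance attribution $g^{\mathrm{LOO}}$ is $\beta^{\mathrm{LOO}}$-robust for $z_i$, where $$\beta^{\mathrm{Shap}}\le \frac{n^{-1}\sum_{k=0}^{n-1}\delta_k}{\left(n^{-1}\sum_{k=0}^{n-1}\tau_k\right)^2}\qquad\text{and}\qquad \beta^{\mathrm{LOO}}\le\frac{\delta_{n-1}}{\tau_{n-1}^2}.$$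
   Context: Training set $D_N=\{z_j=(x_j,y_j)\}_{j\in N}$, $N=\{1,\dots,n\}$; test set $D_T$. For $S\subseteq N$, $f_S$ denotes the classifier obtained by training (by a fixed procedure) on $D_S=\{z_j:j\in S\}$, and the utility is the test accuracy $U(S,D_T)=\frac{1}{|D_T|}\sum_{(x_t,y_t)\in D_T}\mathbf{1}[f_S(x_t)=y_t]$. The marginal contribution of $z_i$ to subsets of size $k$ is $\Delta^{D_N}_{z_i}(k,D_T)=\binom{n-1}{k}^{-1}\sum_{S\subseteq N\setminus\{i\},\,|S|=k}\big(U(S\cup\{i\},D_T)-U(S,D_T)\big)$. LOO score: $g^{\mathrm{LOO}}(z_i,D_T,D_N)=\Delta^{D_N}_{z_i}(n-1,D_T)$. Shapley score: $g^{\mathrm{Shap}}(z_i,D_T,D_N)=n^{-1}\sum_{k=0}^{n-1}\Delta^{D_N}_{z_i}(k,D_T)$. $z_i$ is consistently helpful if $\tau_k\ge 0$ for all $k\in\{0,\dots,n-1\}$, and consistently harmful if $\tau_k<0$ for all such $k$. Define $\mathrm{sgn}(x)=-1$ if $x<0$ and $\mathrm{sgn}(x)=1$ if $x\ge 0$; set $\mathrm{sgn}^*(z_i)=1$ if $z_i$ is consistently helpful and $\mathrm{sgn}^*(z_i)=-1$ if consistently harmful. An attribution function $g$ is $\beta$-robust for $z_i$ if $\mathbb{P}_{D_N\sim\mathcal{P}^{n-1}|z_i}\big(\mathrm{sgn}(g(z_i,D_T,D_N))\neq\mathrm{sgn}^*(z_i)\big)=\beta$. *)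

From HB Require Import structures.
From mathcomp Require Import all_boot all_order all_algebra.
From mathcomp Require Import all_classical all_reals all_analysis.

Set Implicit Arguments.
Unset Strict Implicit.
Unset Printing Implicit Defensive.

Import Order.TTheory GRing.Theory Num.Theory.

Local Open Scope classical_set_scope.
Local Open Scope ring_scope.

(* The label set [C] = {0,...,C}: we write the number of classes as C.+1
   (it is >= 1 since the fixed training point z_i carries a label).
   It is given the discrete sigma-algebra. *)
Definition label (C : nat) : Type := 'I_C.+1.
HB.instance Definition _ C := Choice.on (label C).
HB.instance Definition _ C := isPointed.Build (label C) (@ord0 C).
HB.instance Definition _ C := @isMeasurable.Build default_measure_display
  (label C) discrete_measurable discrete_measurable0
  discrete_measurableC discrete_measurableU.

Section attribution.
Variables (R : realType) (T X L : Type).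

Definition train (n : nat) (S : {set 'I_n}) (z : 'I_n -> T) : seq T :=
  [seq z j | j <- enum S].

Definition utility (learn : seq T -> X -> L) (eqL : L -> L -> bool)
  (DT : seq (X * L)) (n : nat) (S : {set 'I_n}) (z : 'I_n -> T) : R :=
  (\sum_(t <- DT) (eqL (learn (train S z) t.1) t.2)%:R) / (size DT)%:R.

End attribution.

Section attribution2.
Variables (R : realType) (X : Type) (C : nat).
Local Notation T := (X * label C)%type.
Variables (learn : seq T -> X -> label C) (DT : seq T) (n : nat) (i : 'I_n).

Definition U (S : {set 'I_n}) (z : 'I_n -> T) : R :=
  @utility R T X (label C) learn (fun a b : label C => a == b) DT n S z.

Definition marginal (k : nat) (z : 'I_n -> T) : R :=
  ('C(n.-1, k)%:R)^-1 *
  \sum_(S : {set 'I_n} | (i \notin S) && (#|S| == k))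
     (U (i |: S) z - U S z).

Definition g_LOO (z : 'I_n -> T) : R := marginal n.-1 z.

Definition g_Shap (z : 'I_n -> T) : R :=
  (n%:R)^-1 * \sum_(k < n) marginal k z.

End attribution2.

Definition sgn (R : realType) (x : R) : R := if x < 0 then -1 else 1.

Section random.
Local Open Scope ereal_scope.
Variables (R : realType) (dX : measure_display) (X : measurableType dX)
  (C : nat) (dO : measure_display) (Omega : measurableType dO)
  (Pr : probability Omega R).
Local Notation T := (X * label C)%type.
Variables (learn : seq T -> X -> label C) (DT : seq T) (n : nat) (i : 'I_n)
  (Z : 'I_n -> Omega -> T).

Definition DN (w : Omega) : 'I_n -> T := fun j => Z j w.

Definition tau (k : nat) : \bar R :=
  'E_Pr[fun w => marginal R learn DT i k (DN w)].
Definition delta (k : nat) : \bar R :=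
  'V_Pr[fun w => marginal R learn DT i k (DN w)].

Definition consistently_helpful : Prop := forall k, (k < n)%N -> 0 <= tau k.
Definition consistently_harmful : Prop := forall k, (k < n)%N -> tau k < 0.

Definition is_sgn_star (s : R) : Prop :=
  (consistently_helpful /\ s = 1%R) \/ (consistently_harmful /\ s = (-1)%R).

Definition beta_robust (g : ('I_n -> T) -> R) (s beta : R) : Prop :=
  Pr [set w | sgn (g (DN w)) != s] = beta%:E.

End random.

(* D_N ~ P^{n-1} | z_i : Z_i is the constant z_i and the Z_j (j <> i) are
   mutually independent random points with law P. *)
Definition iid_given (R : realType) (dT : measure_display)
  (T : measurableType dT) (P : probability T R) (dO : measure_display)
  (Omega : measurableType dO) (Pr : probability Omega R) (n : nat) (i : 'I_n)
  (zi : T) (Z : 'I_n -> Omega -> T) : Prop :=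
  [/\ (forall w, Z i w = zi),
      (forall j, j != i -> measurable_fun setT (Z j)),
      (forall j, j != i -> forall A, measurable A ->
          Pr (Z j @^-1` A) = P A) &
      (forall A : 'I_n -> set T, (forall j, measurable (A j)) ->
          Pr (\bigcap_(j in [set j | j != i]) (Z j @^-1` A j)) =
          (\prod_(j < n | j != i) Pr (Z j @^-1` A j))%E)].

Notation data X C := (X * label C)%type.

From HB Require Import structures.
From mathcomp Require Import all_boot all_order all_algebra.
From mathcomp Require Import all_classical all_reals all_analysis.
From mathcomp Require Import ring lra measurable_realfun.
From mathcomp Require Import measurable_fun_approximation.
Import Order.TTheory GRing.Theory Num.Theory.
Local Open Scope classical_set_scope.
Local Open Scope ring_scope.
Set Implicit Arguments.
Unset Strict Implicit.
Unset Printing Implicit Defensive.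

(* Let g be either attribution and mu = E[g] (n^-1 sum_k tau_k, resp.
   tau_(n-1)); consistent helpfulness or harmfulness makes sgn mu = sgn^*(z_i).
   If sgn g <> sgn mu then |g - mu| >= |mu|, so by Markov's inequality
   P(sgn g <> sgn mu) <= E[H] / mu^2 for any H dominating (g - mu)^2.  For LOO
   take H = (g - mu)^2, of expectation delta_(n-1).  For Shapley,
   (g - mu)^2 = (n^-1 sum_k (Delta_k - tau_k))^2 is dominated by
   H = n^-1 sum_k (Delta_k - tau_k)^2 (Jensen), of expectation
   n^-1 sum_k delta_k. *)

Lemma sgn_neq_sqr_le (R : realType) (x y : R) :
  sgn x != sgn y -> y ^+ 2 <= (x - y) ^+ 2.
Proof.
by rewrite /sgn; case: ifPn; case: ifPn; rewrite ?eqxx // -?leNgt; nra.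
Qed.

Lemma sqr_mean_le_mean_sqr (R : realFieldType) n (a : 'I_n -> R) : (0 < n)%N ->
  (n%:R^-1 * \sum_(k < n) a k) ^+ 2 <= n%:R^-1 * \sum_(k < n) a k ^+ 2.
Proof.
move=> n_gt0; set b := n%:R^-1 * \sum_(k < n) a k.
have n_gt0R : 0 < n%:R :> R by rewrite ltr0n.
have sum_a : \sum_(k < n) a k = n%:R * b.
  by rewrite /b mulrA divff ?mul1r ?gt_eqF.
have : 0 <= \sum_(k < n) (a k - b) ^+ 2.
  by apply: sumr_ge0 => k _; exact: sqr_ge0.
have -> : \sum_(k < n) (a k - b) ^+ 2 = \sum_(k < n) a k ^+ 2 - n%:R * b ^+ 2.
  under eq_bigr do rewrite sqrrB.
  rewrite !big_split /= sumrN sumrMnl -mulr_suml sumr_const card_ord sum_a.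
  rewrite mulr2n -[b ^+ 2 *+ n]mulr_natl; ring.
by rewrite subr_ge0 ler_pdivlMl.
Qed.

Lemma sgn_mean (R : realType) n (a : 'I_n -> R) (s : R) : (0 < n)%N ->
  (forall k, sgn (a k) = s) -> sgn (n%:R^-1 * \sum_(k < n) a k) = s.
Proof.
case: n a => // n a _ sgn_a; rewrite -(sgn_a ord0) /sgn pmulr_rlt0 ?invr_gt0 //.
have sgn_aE k : (a k < 0) = (a ord0 < 0).
  by move: (sgn_a k); rewrite -(sgn_a ord0) /sgn; do 2!case: ifP => //; lra.
have [a0_lt0|a0_ge0] := ltP (a ord0) 0.
  suff -> : \sum_(k < n.+1) a k < 0 by [].
  apply: (@lt_le_trans _ _ (\sum_(k < n.+1) 0)); last by rewrite big1_eq.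
  apply: ltr_sum => [|k _]; last by rewrite sgn_aE.
  by apply/hasP; exists ord0; rewrite ?mem_index_enum.
by rewrite ltNge sumr_ge0 // => k _; rewrite leNgt sgn_aE -leNgt.
Qed.

Lemma ge0_integral_mean d (T : measurableType d) (R : realType)
  (mu : {measure set T -> \bar R}) n (F : 'I_n -> T -> R) :
  (forall k, measurable_fun setT (F k)) -> (forall k w, 0 <= F k w) ->
  (\int[mu]_w (n%:R^-1 * \sum_(k < n) F k w)%:E =
   (n%:R^-1)%:E * \sum_(k < n) \int[mu]_w (F k w)%:E)%E.
Proof.
move=> mF F_ge0.
under eq_integral do rewrite EFinM -sumEFin.
rewrite ge0_integralZl_EFin //; last 2 first.
- by move=> w _; apply: sume_ge0 => k _; rewrite lee_fin.
- by apply: emeasurable_sum => k; exact/measurable_EFinP.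
rewrite ge0_integral_sum // => [k|k w _]; first exact/measurable_EFinP.
by rewrite lee_fin F_ge0.
Qed.

Section sign_error.
Variables (d : measure_display) (T : measurableType d) (R : realType)
  (P : probability T R).

Lemma measurable_sgn_neq (g : T -> R) (s : R) :
  measurable_fun setT g -> measurable [set w | sgn (g w) != s].
Proof.
move=> mg; have msg : measurable_fun setT (fun w => sgn (g w)).
  apply: measurable_fun_ifT; last 2 first.
  - exact: measurable_cst.
  - exact: measurable_cst.
  by apply: measurable_fun_ltr => //; exact: measurable_cst.
have -> : [set w | sgn (g w) != s] = (fun w => sgn (g w)) @^-1` [set~ s].
  by apply/seteqP; split => w /= /eqP.
rewrite -[X in measurable X]setTI.
exact: msg measurableT _ (measurableC (measurable_set1 s)).
Qed.

Lemma sign_error_le (g H : T -> R) (mu : R) :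
  measurable_fun setT g -> measurable_fun setT H -> (forall w, 0 <= H w) ->
  (forall w, (g w - mu) ^+ 2 <= H w) ->
  (P [set w | sgn (g w) != sgn mu] <=
     (\int[P]_w (H w)%:E) / (mu%:E * mu%:E))%E.
Proof.
move=> mg mH H0 gH; set A := [set w | _ != _].
have mA : measurable A := measurable_sgn_neq _ mg.
have mHE : measurable_fun setT (EFin \o H) by exact/measurable_EFinP.
have absH : (\int[P]_w `|(H w)%:E| = \int[P]_w (H w)%:E)%E.
  by apply: eq_integral => w _; rewrite gee0_abs // lee_fin.
have [mu0|mu_neq0] := eqVneq mu 0; last first.
  have mu2_gt0 : 0 < mu ^+ 2 by rewrite exprn_even_gt0.
  have AH : A `<=` [set w | ((mu ^+ 2)%:E <= `|(H w)%:E|)%E].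
    move=> w /sgn_neq_sqr_le Aw /=.
    by rewrite lee_fin ger0_norm //; exact: le_trans Aw (gH w).
  have := le_integral_abse P measurableT mHE mu2_gt0.
  rewrite setTI absH -EFinM inver mulf_eq0 orbb (negbTE mu_neq0) -expr2.
  rewrite lee_pdivlMr // muleC; apply: le_trans.
  rewrite lee_pmul2r ?lte_fin //; apply: le_measure AH; rewrite inE //.
  rewrite -[X in measurable X]setTI.
  by apply: emeasurable_fun_c_infty => //; exact: measurableT_comp.
(* As [0^-1 = +oo] in [\bar R], the bound is trivial unless [E[H] = 0], in
   which case [H = 0] a.e.; since [sgn 0 = 1], [A] is [g < 0] and so [H > 0]. *)
rewrite mu0 mule0 inver eqxx.
have [H_eq0|H_neq0] := eqVneq (\int[P]_w (H w)%:E)%E 0; last first.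
  rewrite muleC gt0_mulye ?leey // lt0e H_neq0.
  by rewrite integral_ge0 // => w _; rewrite lee_fin.
rewrite H_eq0 mul0e; move: H_eq0; rewrite -absH.
case/(ae_eq_integral_abs P measurableT mHE) => N [mN PN0 sub].
rewrite -PN0 le_measure ?inE // => w Aw; apply: sub => /(_ I) /eqP.
rewrite eqe => /eqP Hw0; move: Aw (gH w); rewrite /A /= /sgn mu0 ltxx Hw0 subr0.
by case: ifPn => [gw _|_]; [nra|rewrite eqxx].
Qed.
End sign_error.

Lemma U_ge0_le1 (R : realType) (X : Type) (C : nat)
  (learn : seq (data X C) -> X -> label C) (DT : seq (data X C)) n
  (S : {set 'I_n}) (z : 'I_n -> data X C) :
  0 <= U R learn DT S z <= 1.
Proof.
rewrite /U /utility; have [->|DT_neq0] := eqVneq (size DT) 0%N.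
  by rewrite invr0 mulr0 lexx ler01.
have DT_gt0 : 0 < (size DT)%:R :> R by rewrite ltr0n lt0n.
rewrite divr_ge0 ?sumr_ge0 //= ler_pdivrMr // mul1r -natr_sum ler_nat.
by rewrite -sum1_size; apply: leq_sum => t _; case: (_ == _).
Qed.

Lemma marginal_bounded (R : realType) (X : Type) (C : nat)
  (learn : seq (data X C) -> X -> label C) (DT : seq (data X C)) n (i : 'I_n)
  (k : nat) : exists M : R, forall z, `|marginal R learn DT i k z| <= M.
Proof.
exists (`|('C(n.-1, k)%:R : R)^-1| *
  \sum_(S : {set 'I_n} | (i \notin S) && (#|S| == k)) 1) => z.
rewrite /marginal normrM ler_wpM2l //.
apply: le_trans (ler_norm_sum _ _ _) _; apply: ler_sum => S _.
have /andP[US_ge0 US_le1] := U_ge0_le1 R learn DT S z.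
have /andP[UiS_ge0 UiS_le1] := U_ge0_le1 R learn DT (i |: S) z.
by rewrite ler_norml; apply/andP; split; lra.
Qed.

Section random_training_set.
Variables (R : realType) (dX : measure_display) (X : measurableType dX)
  (C : nat) (DT : seq (data X C)) (learn : seq (data X C) -> X -> label C)
  (n : nat) (i : 'I_n) (dO : measure_display) (Omega : measurableType dO)
  (Pr : probability Omega R) (Z : 'I_n -> Omega -> data X C).
Hypothesis measurable_learn : forall (S : {set 'I_n}) (t : data X C),
  measurable [set w | learn (train S (DN Z w)) t.1 == t.2].

Let Delta k w := marginal R learn DT i k (DN Z w).

Lemma measurable_U (S : {set 'I_n}) :
  measurable_fun setT (fun w => U R learn DT S (DN Z w)).
Proof.
apply: measurable_funM; last exact: measurable_cst.
apply: measurable_sum => t.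
rewrite (_ : (fun w => _) = \1_[set w | learn (train S (DN Z w)) t.1 == t.2]).
  exact: measurable_indic.
apply/funext => w; rewrite /indic; case: (boolP (_ == _)) => learn_t.
  by rewrite mem_set.
by rewrite memNset //=; exact/negP.
Qed.

Lemma measurable_marginal k : measurable_fun setT (Delta k).
Proof.
rewrite /Delta /marginal; apply: measurable_funM; first exact: measurable_cst.
under eq_fun do rewrite big_mkcond.
apply: measurable_sum => S; case: (_ && _); last exact: measurable_cst.
by apply: measurable_funB; exact: measurable_U.
Qed.

Lemma integrable_marginal k : Pr.-integrable setT (EFin \o Delta k).
Proof.
have [M M_bound] := marginal_bounded R learn DT i k.
apply: measurable_bounded_integrable => //.
- exact: le_lt_trans (probability_le1 Pr measurableT) (ltry 1).
- exact: measurable_marginal.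
exists M; split => [|x M_lt_x w _]; first exact: num_real.
exact: le_trans (M_bound _) (ltW M_lt_x).
Qed.

Lemma measurable_sqr_dev_marginal k (c : R) :
  measurable_fun setT (fun w => (Delta k w - c) ^+ 2).
Proof.
apply: measurable_funX; apply: measurable_funB; last exact: measurable_cst.
exact: measurable_marginal.
Qed.

Lemma tau_fin_num k : tau Pr learn DT i Z k \is a fin_num.
Proof.
by rewrite /tau expectation.unlock integrable_fin_num ?integrable_marginal.
Qed.

Let m k := fine (tau Pr learn DT i Z k).

Lemma tauE k : tau Pr learn DT i Z k = (m k)%:E.
Proof. by rewrite fineK ?tau_fin_num. Qed.

Lemma deltaE k :
  delta Pr learn DT i Z k = (\int[Pr]_w ((Delta k w - m k) ^+ 2)%:E)%E.
Proof.
rewrite /delta /variance covariance.unlock /m /tau expectation.unlock.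
by apply: eq_integral => w _; rewrite /= expr2.
Qed.

Variable s : R.
Hypothesis sgn_star_s : is_sgn_star Pr learn DT i Z s.

Lemma sgn_tau k : (k < n)%N -> sgn (m k) = s.
Proof.
move=> lt_kn; case: sgn_star_s => [[helpful ->]|[harmful ->]]; rewrite /sgn.
  by rewrite ltNge fine_ge0 ?helpful.
by rewrite -lte_fin -tauE harmful.
Qed.

Lemma beta_robust_le (g : ('I_n -> data X C) -> R) (b : \bar R) :
  measurable_fun setT (fun w => g (DN Z w)) ->
  (Pr [set w | sgn (g (DN Z w)) != s] <= b)%E ->
  exists beta, beta_robust Pr Z g s beta /\ (beta%:E <= b)%E.
Proof.
move=> mg le_b; exists (fine (Pr [set w | sgn (g (DN Z w)) != s])).
by rewrite /beta_robust fineK // fin_num_measure //; exact: measurable_sgn_neq.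
Qed.

Lemma g_Shap_robust : exists betaShap : R,
  beta_robust Pr Z (g_Shap R learn DT i) s betaShap /\
  (betaShap%:E <=
     ((n%:R^-1)%:E * \sum_(k < n) delta Pr learn DT i Z k) /
     (((n%:R^-1)%:E * \sum_(k < n) tau Pr learn DT i Z k) *
      ((n%:R^-1)%:E * \sum_(k < n) tau Pr learn DT i Z k)))%E.
Proof.
have n_gt0 : (0 < n)%N := leq_ltn_trans (leq0n i) (ltn_ord i).
have mShap : measurable_fun setT (fun w => g_Shap R learn DT i (DN Z w)).
  apply: measurable_funM; first exact: measurable_cst.
  by apply: measurable_sum => k; exact: measurable_marginal.
apply: beta_robust_le => //.
set mu := n%:R^-1 * \sum_(k < n) m k.
have -> : ((n%:R^-1)%:E * \sum_(k < n) tau Pr learn DT i Z k = mu%:E)%E.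
  by rewrite EFinM -sumEFin; under eq_bigr do rewrite tauE.
have -> : ((n%:R^-1)%:E * \sum_(k < n) delta Pr learn DT i Z k =
    \int[Pr]_w (n%:R^-1 * \sum_(k < n) (Delta k w - m k) ^+ 2)%:E)%E.
  rewrite ge0_integral_mean => [||k w]; last exact: sqr_ge0.
    by under eq_bigr do rewrite deltaE.
  by move=> k; exact: measurable_sqr_dev_marginal.
rewrite -(sgn_mean n_gt0 (fun k : 'I_n => sgn_tau (ltn_ord k))).
apply: sign_error_le => // [||w].
- apply: measurable_funM; first exact: measurable_cst.
  by apply: measurable_sum => k; exact: measurable_sqr_dev_marginal.
- by move=> w; rewrite mulr_ge0 ?invr_ge0 ?sumr_ge0 // => k _; exact: sqr_ge0.
by rewrite /g_Shap /mu -mulrBr -sumrB sqr_mean_le_mean_sqr.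
Qed.

Lemma g_LOO_robust : exists betaLOO : R,
  beta_robust Pr Z (g_LOO R learn DT i) s betaLOO /\
  (betaLOO%:E <=
     delta Pr learn DT i Z n.-1 /
     (tau Pr learn DT i Z n.-1 * tau Pr learn DT i Z n.-1))%E.
Proof.
have lt_n1_n : (n.-1 < n)%N by rewrite prednK // (leq_ltn_trans (leq0n i)).
apply: beta_robust_le; first exact: measurable_marginal.
rewrite tauE deltaE -(sgn_tau lt_n1_n).
apply: sign_error_le => //; first exact: measurable_marginal.
- exact: measurable_sqr_dev_marginal.
- by move=> w; exact: sqr_ge0.
Qed.

End random_training_set.

Theorem theorem3p4 (R : realType) (dX : measure_display) (X : measurableType dX)
  (C : nat) (P : probability (data X C) R)
  (DT : seq (data X C)) (learn : seq (data X C) -> X -> label C)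
  (n : nat) (i : 'I_n) (zi : data X C)
  (dO : measure_display) (Omega : measurableType dO) (Pr : probability Omega R)
  (Z : 'I_n -> Omega -> data X C)
  (HZ : iid_given P Pr i zi Z)
  (Hlearn : forall (S : {set 'I_n}) (t : data X C),
      measurable [set w | learn (train S (DN Z w)) t.1 == t.2])
  (s : R) (Hs : is_sgn_star Pr learn DT i Z s) :
  (exists betaShap : R,
     beta_robust Pr Z (g_Shap R learn DT i) s betaShap /\
     (betaShap%:E <=
        ((n%:R^-1)%:E * \sum_(k < n) delta Pr learn DT i Z k) /
        (((n%:R^-1)%:E * \sum_(k < n) tau Pr learn DT i Z k) *
         ((n%:R^-1)%:E * \sum_(k < n) tau Pr learn DT i Z k)))%E) /\
  (exists betaLOO : R,
     beta_robust Pr Z (g_LOO R learn DT i) s betaLOO /\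
     (betaLOO%:E <=
        delta Pr learn DT i Z n.-1 /
        (tau Pr learn DT i Z n.-1 * tau Pr learn DT i Z n.-1))%E).
Proof.
split; [exact: g_Shap_robust | exact: g_LOO_robust].
Qed.
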